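(* Let $X$ be a finite quandle with connected components $C_1,\dots,C_k$, let $s=(x_1,\dots,x_n)\in X^n$, let $D_j=\{1\le i\le n:x_i\in C_j\}$ and $n_j=|D_j|$, and suppose $n_j>\max_{1\le r\le k}|C_r|$ for every $1\le j\le k$. Then the image in $S_{n_1}\times\dots\times S_{n_k}$ of the stabilizer of $s$ in $B_{n_1,\dots,n_k}$ surjects onto $(\mathbb Z/2\mathbb Z)^k$ under the sign homomorphisms.
   Context: A quandle is a set $X$ with an operation $x^y$ such that $x\mapsto x^y$ is bijective for each $y$, $(z^x)^y=(z^y)^{x^y}$ and $x^x=x$; its connected components are the classes of the smallest equivalence relation with $x\sim x^y$. $B_n$ acts on $X^n$ from the right by $(\dots,x_i,x_{i+1},\dots)^{\sigma_i}=(\dots,x_{i+1},x_i^{x_{i+1}},\dots)$, and $B_n\to S_n$ sends $\sigma_i\mapsto(i\ i+1)$. $S_{n_1}\times\dots\times S_{n_k}$ is identified with $\{\sigma\in S_n:\sigma(D_j)=D_j\ \forall j\}$, and $B_{n_1,\dots,n_k}$ is its preimage in $B_n$. The sign homomorphisms are the signs of the restrictions to each $D_j$. *)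

From mathcomp Require Import all_boot all_fingroup.
Set Implicit Arguments. Unset Strict Implicit. Unset Printing Implicit Defensive.

(* Quandles: x ^ y is written  op x y. *)
Definition is_quandle (X : Type) (op : X -> X -> X) : Prop :=
  [/\ forall y, bijective (fun x => op x y),
      forall x y z, op (op z x) y = op (op z y) (op x y)
    & forall x, op x x = x].

(* generating relation x ~ x^y (symmetrised); its reflexive-transitive closure
   [connect] is the smallest equivalence relation containing x ~ x^y *)
Definition qrel (X : finType) (op : X -> X -> X) : rel X :=
  fun x z => [exists y, op x y == z] || [exists y, op z y == x].

Definition qcomp (X : finType) (op : X -> X -> X) (x : X) : {set X} :=
  [set z | connect (qrel op) x z].

Definition qinv (X : finType) (op : X -> X -> X) (x y : X) : X :=
  odflt x [pick z | op z y == x].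

(* positions i and i+1 (0-indexed) of the generator sigma_{i+1}, i : 'I_n.-1 *)
Lemma gen_lo_proof n (i : 'I_n.-1) : (i : nat) < n.
Proof. by have := ltn_ord i; case: n i => //= n i /ltnW. Qed.
Lemma gen_hi_proof n (i : 'I_n.-1) : (i : nat).+1 < n.
Proof. by have := ltn_ord i; case: n i. Qed.
Definition gen_lo n (i : 'I_n.-1) : 'I_n := Ordinal (gen_lo_proof i).
Definition gen_hi n (i : 'I_n.-1) : 'I_n := Ordinal (gen_hi_proof i).

(* A braid word: sequence of generators sigma_{i+1}^{+1} (b = true) or
   sigma_{i+1}^{-1} (b = false).  Every element of B_n is represented by one. *)
Definition braid_word n := seq ('I_n.-1 * bool).

Definition act_gen (X : finType) (op : X -> X -> X) n
    (s : {ffun 'I_n -> X}) (g : 'I_n.-1 * bool) : {ffun 'I_n -> X} :=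
  let: (i, b) := g in
  let a := s (gen_lo i) in let c := s (gen_hi i) in
  [ffun p => if p == gen_lo i then (if b then c else qinv op c a)
             else if p == gen_hi i then (if b then op a c else a)
             else s p].

Fixpoint act_word (X : finType) (op : X -> X -> X) n
    (s : {ffun 'I_n -> X}) (w : braid_word n) : {ffun 'I_n -> X} :=
  if w is g :: w' then act_word op (act_gen op s g) w' else s.

Fixpoint braid_perm n (w : braid_word n) : {perm 'I_n} :=
  if w is g :: w' then (tperm (gen_lo g.1) (gen_hi g.1) * braid_perm w')%g
  else 1%g.

From mathcomp Require Import all_boot all_fingroup.
Set Implicit Arguments. Unset Strict Implicit. Unset Printing Implicit Defensive.

(** Swapping two positions that carry the same element x is realised by a
    braid fixing s: on adjacent positions sigma_i sends (x, x) to
    (x, x ^ x) = (x, x), and a farther pair is brought next to each other by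
    conjugating with a generator.  As |D_j| > |C_j|, every D_j contains two
    positions carrying the same element; the corresponding transposition is
    odd on D_j and trivial on the other blocks, so products of such
    transpositions realise every sign vector. *)

Section RestrictedPermutations.
Variable T : finType.
Implicit Types (S : {set T}) (p : {perm T}).

Lemma astabs_imset S p : p \in ('N(S | 'P))%g -> p @: S = S.
Proof.
move=> nSp; rewrite -[RHS](im_restr_perm S p).
by apply: eq_in_imset => x xS; rewrite restr_permE.
Qed.

Lemma tperm_astabs S a b : (a \in S) = (b \in S) -> tperm a b \in ('N(S | 'P))%g.
Proof.
by move=> abS; apply/astabsP => x; rewrite /= /aperm; case: tpermP => [->|->|]; rewrite ?abS.
Qed.

Lemma restr_perm_id S p : perm_on S p -> restr_perm S p = p.
Proof.
move=> onSp; have nSp : p \in ('N(S | 'P))%g by apply/astabsP => x; apply: perm_closed.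
apply/permP => x; have [xS|xNS] := boolP (x \in S); first by rewrite restr_permE.
by rewrite !(out_perm _ xNS) // restr_perm_on.
Qed.

Lemma odd_restr_tperm S a b : a != b -> (a \in S) = (b \in S) ->
  odd_perm (restr_perm S (tperm a b)) = (a \in S).
Proof.
move=> neq_ab abS; have [aS|aNS] := boolP (a \in S).
  rewrite restr_perm_id ?odd_tperm //; apply: subset_trans (tperm_on a b) _.
  by rewrite subUset !sub1set -abS aS.
rewrite mker ?odd_perm1 // ker_restr_perm; apply/astabP => x xS.
have bNS : b \notin S by rewrite -abS.
by rewrite /= /aperm tpermD //; apply: contraTneq xS => <-.
Qed.

End RestrictedPermutations.

Lemma pigeonhole (T U : finType) (f : T -> U) (A : {set T}) (B : {set U}) :
  {in A, forall x, f x \in B} -> #|B| < #|A| ->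
  exists a b, [/\ a \in A, b \in A, a != b & f a = f b].
Proof.
move=> fAB ltBA; have /dinjectivePn[a aA [b /andP[neq_ba bA] fab]] : ~~ dinjectiveb f A.
  apply: contraTN ltBA => /dinjectiveP injf; rewrite -leqNgt -(card_in_imset injf).
  by apply/subset_leq_card/subsetP => _ /imsetP[x xA ->]; apply: fAB.
by exists a, b; rewrite eq_sym.
Qed.

Lemma qrel_sym (X : finType) (op : X -> X -> X) : symmetric (qrel op).
Proof. by move=> x z; rewrite /qrel orbC. Qed.

Lemma qcomp_eq (X : finType) (op : X -> X -> X) x y :
  y \in qcomp op x -> qcomp op y = qcomp op x.
Proof.
rewrite inE => cxy; apply/setP => z; rewrite !inE.
by rewrite (same_connect (sym_connect_sym (qrel_sym op)) cxy).
Qed.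

Section BraidWords.
Variables (X : finType) (op : X -> X -> X) (n : nat).
Implicit Types (s : {ffun 'I_n -> X}) (w : braid_word n) (i : 'I_n.-1).

Lemma act_word_cat s w1 w2 :
  act_word op s (w1 ++ w2) = act_word op (act_word op s w1) w2.
Proof. by elim: w1 s => //= g w IH s. Qed.

Lemma braid_perm_cat w1 w2 :
  braid_perm (w1 ++ w2) = (braid_perm w1 * braid_perm w2)%g.
Proof. by elim: w1 => /= [|g w ->]; rewrite ?mul1g ?mulgA. Qed.

Lemma braid_perm_conj i w :
  braid_perm ((i, true) :: rcons w (i, false))
  = (braid_perm w ^ tperm (gen_lo i) (gen_hi i))%g.
Proof. by rewrite /= -cats1 braid_perm_cat /= mulg1 /conjg tpermV mulgA. Qed.

Lemma gen_lo_neq_hi i : gen_lo i != gen_hi i.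
Proof. by rewrite -val_eqE /= ltn_eqF. Qed.

Lemma gen_hi_onto (b : 'I_n) : 0 < b -> exists i, gen_hi i = b.
Proof.
move=> b_gt0; have lt_b : b.-1 < n.-1.
  by rewrite -ltnS (ltn_predK b_gt0) (ltn_predK (ltn_ord b)).
by exists (Ordinal lt_b); apply: val_inj; rewrite /= (ltn_predK b_gt0).
Qed.

Hypotheses (op_inj : forall y, injective (op^~ y)) (op_idem : idempotent_op op).

Lemma qinv_opK x y : qinv op (op x y) y = x.
Proof. by rewrite /qinv; case: pickP => [z /eqP /op_inj // | /(_ x)]; rewrite eqxx. Qed.

Lemma act_genK s i : act_gen op (act_gen op s (i, true)) (i, false) = s.
Proof.
apply/ffunP => p; rewrite /= !ffunE [gen_hi i == _]eq_sym.
rewrite (negbTE (gen_lo_neq_hi i)) !eqxx qinv_opK.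
by case: eqP => [->|_] //; case: eqP => [->|_].
Qed.

Lemma act_gen_id s i : s (gen_lo i) = s (gen_hi i) -> act_gen op s (i, true) = s.
Proof.
move=> s_eq; apply/ffunP => p; rewrite /= ffunE -s_eq op_idem.
by case: eqP => [->|_] //; case: eqP => [->|_].
Qed.

Lemma act_word_conj s i w :
  act_word op (act_gen op s (i, true)) w = act_gen op s (i, true) ->
  act_word op s ((i, true) :: rcons w (i, false)) = s.
Proof. by move=> fix_w; rewrite /= -cats1 act_word_cat fix_w; apply: act_genK. Qed.

Lemma swap_word_lt s (a b : 'I_n) : a < b -> s a = s b ->
  exists w, act_word op s w = s /\ braid_perm w = tperm a b.
Proof.
move Ed: (b - a.+1) => d; elim: d s b Ed => [|d IH] s b Ed lt_ab sab;
  have [i hi_b] := gen_hi_onto (leq_ltn_trans (leq0n a) lt_ab);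
  have val_b : val b = i.+1 by rewrite -hi_b.
- have lo_a : gen_lo i = a.
    by apply: val_inj => /=; apply/eqP; rewrite -eqSS -val_b eqn_leq lt_ab -subn_eq0 Ed.
  exists [:: (i, true)]; split; last by rewrite /= mulg1 lo_a hi_b.
  by apply: act_gen_id; rewrite lo_a hi_b.
pose c := gen_lo i; pose s' := act_gen op s (i, true).
have lt_ac : a < c by rewrite -subn_gt0 /c /= -subSS -val_b Ed.
have Ec : c - a.+1 = d by rewrite /c /= subnS -subSS -val_b Ed.
have neq_ac : a != c by rewrite -val_eqE ltn_eqF.
have neq_ab : a != b by rewrite -val_eqE ltn_eqF.
have s'ac : s' a = s' c.
  by rewrite !ffunE -/c eqxx (negbTE neq_ac) hi_b (negbTE neq_ab).
have [w [fix_w perm_w]] := IH s' c Ec lt_ac s'ac.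
exists ((i, true) :: rcons w (i, false)); split; first exact: act_word_conj.
by rewrite braid_perm_conj perm_w -/c hi_b tpermJ tpermL tpermD // eq_sym.
Qed.

Lemma swap_word s (a b : 'I_n) : a != b -> s a = s b ->
  exists w, act_word op s w = s /\ braid_perm w = tperm a b.
Proof.
move=> neq_ab sab; case: (ltngtP a b) => [lt_ab|lt_ba|/val_inj eq_ab].
- exact: swap_word_lt.
- by rewrite tpermC; apply: swap_word_lt lt_ba (esym sab).
- by rewrite eq_ab eqxx in neq_ab.
Qed.

End BraidWords.

Section SignsOfStabilizer.
Variables (X : finType) (op : X -> X -> X) (k n : nat).
Variables (C : 'I_k -> {set X}) (s : {ffun 'I_n -> X}).
Hypotheses (op_inj : forall y, injective (op^~ y)) (op_idem : idempotent_op op).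
Hypotheses (C_inj : injective C)
  (C_comps : [set C j | j : 'I_k] = [set qcomp op x | x : X]).

Let D j := [set i : 'I_n | s i \in C j].

Hypothesis card_C_lt : forall j, #|C j| < #|D j|.

Lemma mem_C_inj x j j' : x \in C j -> x \in C j' -> j = j'.
Proof.
have C_comp j0 : x \in C j0 -> C j0 = qcomp op x.
  have /imsetP[y _ ->] : C j0 \in [set qcomp op x | x : X] by rewrite -C_comps imset_f.
  by move/qcomp_eq.
by move=> /C_comp Cj /C_comp Cj'; apply: C_inj; rewrite Cj Cj'.
Qed.

Lemma repeated_entry j : exists a b, [/\ a != b, s a = s b & s a \in C j].
Proof.
have [|a [b [aD bD neq_ab sab]]] := @pigeonhole _ _ s (D j) (C j) _ (card_C_lt j).
  by move=> i; rewrite inE.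
by exists a, b; rewrite inE in aD.
Qed.

Lemma stabilizer_word_signs (L : seq 'I_k) : uniq L -> exists w : braid_word n,
  [/\ act_word op s w = s, forall j, braid_perm w \in ('N(D j | 'P))%g
    & forall j, odd_perm (restr_perm (D j) (braid_perm w)) = (j \in L)].
Proof.
elim: L => [_|j L IH /= /andP[jNL uniq_L]].
  by exists [::]; split => //= j; rewrite morph1 odd_perm1.
have [w [fix_w N_w sign_w]] := IH uniq_L.
have [a [b [neq_ab sab saC]]] := repeated_entry j.
have [w0 [fix_w0 perm_w0]] := swap_word op_inj op_idem neq_ab sab.
have abD j' : (a \in D j') = (b \in D j') by rewrite !inE sab.
have aD j' : (a \in D j') = (j == j').
  by rewrite inE; apply/idP/eqP => [/(mem_C_inj saC) | <-].
exists (w0 ++ w); split => [|j'|j']; first by rewrite act_word_cat fix_w0.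
  by rewrite braid_perm_cat perm_w0 groupM ?N_w ?tperm_astabs.
rewrite braid_perm_cat perm_w0 morphM ?N_w ?tperm_astabs //= odd_permM sign_w.
rewrite odd_restr_tperm // aD inE eq_sym.
by case: eqP => [->|]; rewrite ?(negbTE jNL).
Qed.

End SignsOfStabilizer.

Theorem proposition4p35 (X : finType) (op : X -> X -> X) (k n : nat)
    (C : 'I_k -> {set X}) (s : {ffun 'I_n -> X}) :
  is_quandle op ->
  injective C ->
  [set C j | j : 'I_k] = [set qcomp op x | x : X] ->
  (forall j r : 'I_k, #|C r| < #|[set i : 'I_n | s i \in C j]|) ->
  forall e : 'I_k -> bool,
  exists w : braid_word n,
    [/\ act_word op s w = s,
        forall j : 'I_k, braid_perm w @: [set i : 'I_n | s i \in C j]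
                         = [set i : 'I_n | s i \in C j]
      & forall j : 'I_k,
          odd_perm (restr_perm [set i : 'I_n | s i \in C j] (braid_perm w))
          = e j].
Proof.
move=> [op_bij _ op_idem] C_inj C_comps card_lt e.
have op_inj y : injective (op^~ y) := bij_inj (op_bij y).
have uniq_e : uniq [seq j <- enum 'I_k | e j] by rewrite filter_uniq ?enum_uniq.
have [w [fix_w N_w sign_w]] :=
  stabilizer_word_signs op_inj op_idem C_inj C_comps (fun j => card_lt j j) uniq_e.
exists w; split => // j; first exact: astabs_imset.
by rewrite sign_w mem_filter mem_enum andbT.
Qed.
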